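(* The group $\operatorname{Homeo}_c(\mathbb{R})$ of compactly supported homeomorphisms of $\mathbb{R}$ is not mitotic.
   Context: A subgroup $H \leq \Gamma$ has a mitosis in $\Gamma$ if there are elements $s,d \in \Gamma$ such that $h\cdot s^{-1}hs = d^{-1}hd$ for all $h \in H$ and $[h, s^{-1}h's] = 1$ for all $h,h' \in H$. A group $\Gamma$ is mitotic if every finitely generated subgroup of $\Gamma$ has a mitosis in $\Gamma$. *)

From Stdlib Require Import Reals Lra List.
Open Scope R_scope.

Record homeo_c := HomeoC {
  hfun : R -> R;
  hinvfun : R -> R;
  hfun_cont : continuity hfun;
  hinvfun_cont : continuity hinvfun;
  hfunK : forall x, hinvfun (hfun x) = x;
  hinvfunK : forall x, hfun (hinvfun x) = x;
  hfun_supp : exists a b : R, forall x, x < a \/ b < x -> hfun x = x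
}.

Definition heq (f g : homeo_c) : Prop := forall x, hfun f x = hfun g x.

Lemma id_supp : exists a b : R, forall x : R, x < a \/ b < x -> (fun y => y) x = x.
Proof. exists 0, 0; auto. Qed.

Lemma cont_id : continuity (fun x : R => x).
Proof. exact (derivable_continuous _ derivable_id). Qed.

Definition hone : homeo_c :=
  HomeoC (fun x => x) (fun x => x) cont_id cont_id
    (fun _ => eq_refl) (fun _ => eq_refl) id_supp.

Lemma mul_supp (f g : homeo_c) :
  exists a b : R, forall x, x < a \/ b < x -> hfun f (hfun g x) = x.
Proof.
  destruct (hfun_supp f) as [a1 [b1 H1]]; destruct (hfun_supp g) as [a2 [b2 H2]].
  exists (Rmin a1 a2), (Rmax b1 b2); intros x Hx.
  assert (Hm1 := Rmin_l a1 a2); assert (Hm2 := Rmin_r a1 a2).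
  assert (HM1 := Rmax_l b1 b2); assert (HM2 := Rmax_r b1 b2).
  rewrite H2 by lra; apply H1; lra.
Qed.

Definition hmul (f g : homeo_c) : homeo_c :=
  HomeoC (fun x => hfun f (hfun g x)) (fun x => hinvfun g (hinvfun f x))
    (continuity_comp (hfun g) (hfun f) (hfun_cont g) (hfun_cont f))
    (continuity_comp (hinvfun f) (hinvfun g) (hinvfun_cont f) (hinvfun_cont g))
    (fun x => eq_trans (f_equal (hinvfun g) (hfunK f (hfun g x))) (hfunK g x))
    (fun x => eq_trans (f_equal (hfun f) (hinvfunK g (hinvfun f x))) (hinvfunK f x))
    (mul_supp f g).

Lemma inv_supp (f : homeo_c) :
  exists a b : R, forall x, x < a \/ b < x -> hinvfun f x = x.
Proof.
  destruct (hfun_supp f) as [a [b H]]; exists a, b; intros x Hx.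
  rewrite <- (H x Hx) at 1. apply hfunK.
Qed.

Definition hinv (f : homeo_c) : homeo_c :=
  HomeoC (hinvfun f) (hfun f) (hinvfun_cont f) (hfun_cont f)
    (hinvfunK f) (hfunK f) (inv_supp f).

Definition hcomm (h k : homeo_c) : homeo_c :=
  hmul (hmul (hinv h) (hinv k)) (hmul h k).

Inductive gen_by (S : list homeo_c) : homeo_c -> Prop :=
| gen_one : gen_by S hone
| gen_in : forall g, In g S -> gen_by S g
| gen_mul : forall g h, gen_by S g -> gen_by S h -> gen_by S (hmul g h)
| gen_inv : forall g, gen_by S g -> gen_by S (hinv g).

Definition has_mitosis (H : homeo_c -> Prop) : Prop :=
  exists s d : homeo_c,
    (forall h, H h -> heq (hmul h (hmul (hinv s) (hmul h s)))
                          (hmul (hinv d) (hmul h d))) /\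
    (forall h h', H h -> H h' -> heq (hcomm h (hmul (hinv s) (hmul h' s))) hone).

Definition homeo_c_mitotic : Prop :=
  forall S : list homeo_c, has_mitosis (gen_by S).

From Stdlib Require Import Reals List Lra.
From Coquelicot Require Import Continuity.
Import ListNotations.
Open Scope R_scope.

(* Take bumps h and g supported on [0, 2] and [1, 3], and suppose s, d give a
   mitosis of <h, g>.  Every compactly supported homeomorphism is increasing,
   so a homeomorphism commuting with a bump fixes the endpoints of its
   support.  Hence the supports of u := s^-1 h s and h are either equal or
   disjoint, and since u also commutes with g they are disjoint.  Then h u
   moves the points of two disjoint intervals, whereas its conjugate
   d^-1 h d moves exactly the points of one interval. *)

Ltac case_minmax := unfold Rmax, Rmin; repeat destruct Rle_dec; lra.

Lemma Rmax_Rabs (u v : R) : Rmax u v = (u + v + Rabs (u - v)) / 2.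
Proof. unfold Rmax; destruct Rle_dec; [rewrite Rabs_left1 | rewrite Rabs_right]; lra. Qed.

Lemma continuity_Rmax (f g : R -> R) :
  continuity f -> continuity g -> continuity (fun x => Rmax (f x) (g x)).
Proof.
  intros Hf Hg x.
  apply (continuity_pt_ext (fun y => (f y + g y + Rabs (f y - g y)) / 2)).
  - intro y; symmetry; apply Rmax_Rabs.
  - reg.
Qed.

Lemma continuity_Rmin (f g : R -> R) :
  continuity f -> continuity g -> continuity (fun x => Rmin (f x) (g x)).
Proof.
  intros Hf Hg x.
  apply (continuity_pt_ext (fun y => - Rmax (- f y) (- g y))).
  - intro y; now rewrite Ropp_Rmax, !Ropp_involutive.
  - apply continuity_pt_opp, continuity_Rmax; now apply continuity_opp.
Qed.

Lemma hfun_inj (f : homeo_c) (x y : R) : hfun f x = hfun f y -> x = y.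
Proof. intro E. rewrite <- (hfunK f x), E. apply hfunK. Qed.

(* If f y < f x for some x < y, the intermediate value theorem on [y, z],
   with z beyond the support of f and above f x, yields a second preimage
   of f x. *)
Lemma hfun_lt (f : homeo_c) (x y : R) : x < y -> hfun f x < hfun f y.
Proof.
  intro Hxy.
  destruct (Rlt_le_dec (hfun f x) (hfun f y)) as [|Hyx]; [assumption | exfalso].
  destruct (Req_dec (hfun f y) (hfun f x)) as [E|Hne].
  { apply hfun_inj in E; lra. }
  destruct (hfun_supp f) as (a & b & Hid).
  set (z := Rmax (Rmax y b) (hfun f x) + 1).
  assert (Hz : y < z /\ b < z /\ hfun f x < z) by (unfold z; case_minmax).
  assert (Fz : hfun f z = z) by (apply Hid; lra).
  destruct (IVT (fun w => hfun f w - hfun f x) y z) as (c & Hc & Ec);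
    [pose proof (hfun_cont f); reg | lra | lra | lra |].
  assert (E : hfun f c = hfun f x) by lra.
  apply hfun_inj in E; lra.
Qed.

Lemma hfun_lt_iff (f : homeo_c) (x y : R) : hfun f x < hfun f y <-> x < y.
Proof.
  split; [|apply hfun_lt].
  intro H. destruct (Rlt_le_dec x y) as [|Hyx]; [assumption|].
  destruct (Rle_lt_or_eq_dec _ _ Hyx) as [Hlt|E]; [apply (hfun_lt f) in Hlt | subst]; lra.
Qed.

Lemma hfun_le_iff (f : homeo_c) (x y : R) : hfun f x <= hfun f y <-> x <= y.
Proof.
  split; intro H; apply Rnot_lt_le; intro Hlt;
    [apply (hfun_lt f) in Hlt | rewrite hfun_lt_iff in Hlt]; lra.
Qed.

Lemma hcomm_eq_one_commute (f g : homeo_c) :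
  heq (hcomm f g) hone -> forall x, hfun f (hfun g x) = hfun g (hfun f x).
Proof.
  intros H x. specialize (H x). simpl in H.
  apply (f_equal (hfun f)) in H. rewrite hinvfunK in H.
  apply (f_equal (hfun g)) in H. now rewrite hinvfunK in H.
Qed.

Definition hconj (f s : homeo_c) : homeo_c := hmul (hinv s) (hmul f s).

Definition moves_exactly (f : R -> R) (a b : R) : Prop :=
  forall x, f x <> x <-> a < x < b.

Lemma moves_exactly_fixed (f : R -> R) (a b x : R) :
  moves_exactly f a b -> f x = x <-> ~ (a < x < b).
Proof. intro Hf. rewrite <- (Hf x). destruct (Req_dec (f x) x); tauto. Qed.

Lemma moves_exactly_hconj (f s : homeo_c) (a b : R) :
  moves_exactly (hfun f) a b ->
  moves_exactly (hfun (hconj f s)) (hinvfun s a) (hinvfun s b).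
Proof.
  intros Hf x. simpl.
  rewrite <- (hfun_lt_iff s (hinvfun s a)), <- (hfun_lt_iff s _ (hinvfun s b)),
    !hinvfunK, <- (Hf (hfun s x)).
  split; intros Hne E; apply Hne.
  - now rewrite E, hfunK.
  - apply (f_equal (hfun s)) in E. now rewrite hinvfunK in E.
Qed.

Lemma moves_exactly_commute (f : R -> R) (k : homeo_c) (a b : R) :
  moves_exactly f a b -> (forall x, f (hfun k x) = hfun k (f x)) ->
  forall x, a < hfun k x < b <-> a < x < b.
Proof.
  intros Hf Hk x. rewrite <- (Hf (hfun k x)), <- (Hf x), Hk.
  split; intros Hne E; apply Hne; [now rewrite E | exact (hfun_inj k _ _ E)].
Qed.

Lemma interval_invariant_le (k : homeo_c) (a b : R) :
  a < b -> (forall x, a < hfun k x < b <-> a < x < b) ->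
  hfun k a <= a /\ b <= hfun k b.
Proof.
  intros Hab Hk. set (m := (a + b) / 2).
  assert (Hm : a < hfun k m < b) by (apply Hk; unfold m; lra).
  assert (Ha : ~ (a < hfun k a < b)) by (rewrite Hk; lra).
  assert (Hb : ~ (a < hfun k b < b)) by (rewrite Hk; lra).
  assert (hfun k a < hfun k m) by (apply hfun_lt; unfold m; lra).
  assert (hfun k m < hfun k b) by (apply hfun_lt; unfold m; lra).
  lra.
Qed.

Lemma interval_invariant_fix_endpoints (k : homeo_c) (a b : R) :
  a < b -> (forall x, a < hfun k x < b <-> a < x < b) ->
  hfun k a = a /\ hfun k b = b.
Proof.
  intros Hab Hk.
  assert (Hk' : forall x, a < hfun (hinv k) x < b <-> a < x < b).
  { intro x. rewrite <- Hk. simpl. now rewrite hinvfunK. }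
  destruct (interval_invariant_le k a b Hab Hk) as [Ha Hb].
  destruct (interval_invariant_le (hinv k) a b Hab Hk') as [Ha' Hb']; simpl in Ha', Hb'.
  rewrite <- (hfun_le_iff k), hinvfunK in Ha', Hb'.
  split; lra.
Qed.

Lemma commute_fix_endpoints (f : R -> R) (k : homeo_c) (a b : R) :
  a < b -> moves_exactly f a b -> (forall x, f (hfun k x) = hfun k (f x)) ->
  hfun k a = a /\ hfun k b = b.
Proof.
  intros Hab Hf Hk.
  exact (interval_invariant_fix_endpoints k a b Hab (moves_exactly_commute f k a b Hf Hk)).
Qed.

Lemma commute_supports_eq_or_disjoint (f g : homeo_c) (a b p q : R) :
  a < b -> p < q -> moves_exactly (hfun f) a b -> moves_exactly (hfun g) p q ->
  (forall x, hfun f (hfun g x) = hfun g (hfun f x)) ->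
  (a = p /\ b = q) \/ b <= p \/ q <= a.
Proof.
  intros Hab Hpq Hf Hg Hfg.
  destruct (commute_fix_endpoints (hfun f) g a b) as [ga gb]; auto.
  destruct (commute_fix_endpoints (hfun g) f p q) as [fp fq]; auto.
  rewrite (moves_exactly_fixed _ p q) in ga, gb by assumption.
  rewrite (moves_exactly_fixed _ a b) in fp, fq by assumption.
  lra.
Qed.

Lemma moves_exactly_mul_disjoint (f g : homeo_c) (a b p q : R) :
  b <= p \/ q <= a -> moves_exactly (hfun f) a b -> moves_exactly (hfun g) p q ->
  forall x, hfun f (hfun g x) <> x <-> a < x < b \/ p < x < q.
Proof.
  intros Hdisj Hf Hg x.
  destruct (Req_dec (hfun g x) x) as [Ex|Nx].
  - rewrite Ex, (Hf x). rewrite (moves_exactly_fixed _ p q) in Ex by assumption. tauto.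
  - assert (Hx : p < x < q) by now apply Hg.
    assert (Hgx : p < hfun g x < q) by now rewrite (moves_exactly_commute (hfun g) g p q).
    assert (Fgx : hfun f (hfun g x) = hfun g x) by (apply (moves_exactly_fixed _ a b); auto; lra).
    rewrite Fgx. tauto.
Qed.

(* The gap between the two supports is fixed by f g. *)
Lemma mul_disjoint_not_moves_interval (f g : homeo_c) (a b p q r t : R) :
  a < b -> p < q -> b <= p \/ q <= a ->
  moves_exactly (hfun f) a b -> moves_exactly (hfun g) p q ->
  ~ moves_exactly (fun x => hfun f (hfun g x)) r t.
Proof.
  intros Hab Hpq Hdisj Hf Hg Hfg.
  assert (H : forall x, r < x < t <-> a < x < b \/ p < x < q).
  { intro x. rewrite <- (Hfg x). now apply moves_exactly_mul_disjoint. }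
  pose proof (H ((a + b) / 2)); pose proof (H ((p + q) / 2)); pose proof (H b); pose proof (H q).
  lra.
Qed.

(* Piecewise linear with slope 3/2 on [a, (a+b)/2] and 1/2 on [(a+b)/2, b]. *)
Definition bump_fun (a b x : R) : R :=
  Rmax x (Rmin (a + 3/2 * (x - a)) (b + (x - b) / 2)).

Definition bump_inv (a b y : R) : R :=
  Rmin y (Rmax (a + 2/3 * (y - a)) (b + 2 * (y - b))).

Lemma bump_funK (a b x : R) : bump_inv a b (bump_fun a b x) = x.
Proof. unfold bump_inv, bump_fun; case_minmax. Qed.

Lemma bump_invK (a b y : R) : bump_fun a b (bump_inv a b y) = y.
Proof. unfold bump_inv, bump_fun; case_minmax. Qed.

Lemma bump_moves_exactly (a b : R) : moves_exactly (bump_fun a b) a b.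
Proof. intro x; unfold bump_fun; case_minmax. Qed.

Lemma bump_fun_supp (a b : R) :
  exists a' b' : R, forall x, x < a' \/ b' < x -> bump_fun a b x = x.
Proof. exists a, b; intros x Hx; unfold bump_fun; case_minmax. Qed.

Lemma continuity_bump_fun (a b : R) : continuity (bump_fun a b).
Proof.
  apply continuity_Rmax; [exact cont_id|].
  apply continuity_Rmin; intro x; reg.
Qed.

Lemma continuity_bump_inv (a b : R) : continuity (bump_inv a b).
Proof.
  apply continuity_Rmin; [exact cont_id|].
  apply continuity_Rmax; intro x; reg.
Qed.

Definition bump (a b : R) : homeo_c :=
  HomeoC (bump_fun a b) (bump_inv a b) (continuity_bump_fun a b)
    (continuity_bump_inv a b) (bump_funK a b) (bump_invK a b) (bump_fun_supp a b).

Theorem lemma3p18 : ~ homeo_c_mitotic.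
Proof.
  intros mitotic.
  pose (h := bump 0 2); pose (g := bump 1 3).
  destruct (mitotic [h; g]) as (s & d & Hsplit & Hcomm).
  assert (Gh : gen_by [h; g] h) by (apply gen_in; simpl; auto).
  assert (Gg : gen_by [h; g] g) by (apply gen_in; simpl; auto).
  pose (u := hconj h s).
  assert (Hu : moves_exactly (hfun u) (hinvfun s 0) (hinvfun s 2))
    by apply moves_exactly_hconj, bump_moves_exactly.
  assert (Hpq : hinvfun s 0 < hinvfun s 2) by (apply (hfun_lt (hinv s)); lra).
  assert (Hdisj : 2 <= hinvfun s 0 \/ hinvfun s 2 <= 0).
  { destruct (commute_supports_eq_or_disjoint h u 0 2 _ _ ltac:(lra) Hpq
      (bump_moves_exactly 0 2) Hu (hcomm_eq_one_commute _ _ (Hcomm h h Gh Gh)));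
    destruct (commute_supports_eq_or_disjoint g u 1 3 _ _ ltac:(lra) Hpq
      (bump_moves_exactly 1 3) Hu (hcomm_eq_one_commute _ _ (Hcomm g h Gg Gh)));
    lra. }
  apply (mul_disjoint_not_moves_interval h u 0 2 _ _ (hinvfun d 0) (hinvfun d 2)
           ltac:(lra) Hpq Hdisj (bump_moves_exactly 0 2) Hu).
  intro x.
  assert (E : hfun h (hfun u x) = hfun (hconj h d) x) by exact (Hsplit h Gh x).
  rewrite E. exact (moves_exactly_hconj h d 0 2 (bump_moves_exactly 0 2) x).
Qed.
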